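(* Let $G$ be a graph with no efficient dominating set. Then $|V(G)|\leq\gamma(G)(\Delta(G)+1)-1$. Moreover: (i) Suppose $|V(G)|=\gamma(G)(\Delta(G)+1)-1$. Then (a) for every $\gamma$-set $D$ of $G$ there is exactly one vertex $y_D\in V(G)\setminus D$ such that $D$ is an efficient dominating set of $G-y_D$, and $y_D$ is adjacent to exactly $2$ vertices of $D$; and (b) every vertex belonging to some $\gamma$-set of $G$ has degree $\Delta(G)$. In particular, if every vertex of $G$ belongs to some $\gamma$-set of $G$, then $G$ is regular. (ii) If there exist a $\gamma$-set $D$ of $G$ and a vertex $y\in V(G)\setminus D$ such that $D$ is an efficient dominating set of $G-y$, $y$ is adjacent to exactly $2$ vertices of $D$, and every vertex of $D$ has degree $\Delta(G)$, then $|V(G)|=\gamma(G)(\Delta(G)+1)-1$.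
   Context: All graphs are finite, simple and undirected. For $v\in V(G)$, $N[v]$ is the closed neighborhood of $v$. A set $D\subseteq V(G)$ is dominating if every vertex of $G$ not in $D$ has a neighbor in $D$; $\gamma(G)$ is the minimum size of a dominating set, and a dominating set of size $\gamma(G)$ is a $\gamma$-set. A set $D\subseteq V(H)$ is an efficient dominating set of a graph $H$ if $|N_H[v]\cap D|=1$ for every $v\in V(H)$. $\Delta(G)$ is the maximum degree. *)

(* A simple graph G is a finite type T of vertices with an
   adjacency relation e : rel T that is symmetric and irreflexive. *)
From mathcomp Require Import all_boot all_order.
Set Implicit Arguments. Unset Strict Implicit. Unset Printing Implicit Defensive.

Section Graphs.
Variables (T : finType) (e : rel T).

Definition oN (v : T) : {set T} := [set u | e v u].
Definition cN (v : T) : {set T} := v |: oN v.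

Definition deg (v : T) : nat := #|oN v|.

Definition Delta : nat := \max_(v : T) deg v.

Definition dominating (D : {set T}) : bool :=
  [forall v, (v \notin D) ==> [exists u in D, e v u]].

(* gamma(G): minimum size of a dominating set (setT is dominating) *)
Definition gamma : nat :=
  #|[arg min_(D < [set: T] | dominating D) #|D|]|.

Definition gamma_set (D : {set T}) : bool := dominating D && (#|D| == gamma).

(* D is an efficient dominating set of the induced subgraph G[S]:
   D is a subset of S and |N_{G[S]}[v] ∩ D| = 1 for all v in S. *)
Definition efficient_dom_on (S D : {set T}) : bool :=
  (D \subset S) && [forall v in S, #|cN v :&: S :&: D| == 1].

Definition efficient_dom (D : {set T}) : bool := efficient_dom_on [set: T] D.

Definition efficient_dom_minus (y : T) (D : {set T}) : bool :=
  efficient_dom_on [set~ y] D.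

End Graphs.

(* Count the incidences (v, d) with d in D and d in N[v] in two ways. For a
   dominating set D every v lies in at least one N[d], so the count is
   |V(G)| + x(D), where the excess x(D) := sum_v (|N[v] ∩ D| - 1) vanishes
   exactly when D is efficient; counting from the side of D it is
   sum_{d in D} (deg d + 1) <= |D| (Delta + 1). A gamma-set D of a graph without
   an efficient dominating set has x(D) >= 1, whence the bound. Equality forces
   x(D) = 1 and deg d = Delta on D: a single vertex y is dominated twice, it
   lies outside D (a neighbour of y in D would be dominated twice as well), and
   D dominates G - y efficiently. *)
From mathcomp Require Import all_boot all_order.
From mathcomp Require Import zify.
Set Implicit Arguments. Unset Strict Implicit.

Section DominationCount.
Variables (T : finType) (e : rel T).
Hypotheses (e_sym : symmetric e) (e_irr : irreflexive e).

Lemma in_cN v u : (u \in cN e v) = (u == v) || e v u.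
Proof. by rewrite !inE. Qed.

Lemma cN_sym v u : (u \in cN e v) = (v \in cN e u).
Proof. by rewrite !in_cN eq_sym e_sym. Qed.

Lemma card_cN v : #|cN e v| = (deg e v).+1.
Proof. by rewrite cardsU1 inE e_irr. Qed.

Lemma cN_setI_notin (D : {set T}) v : v \notin D -> cN e v :&: D = oN e v :&: D.
Proof.
move=> vD; apply/setP => u; rewrite !inE.
by case: eqP => [->|] //=; rewrite (negbTE vD) andbF.
Qed.

Lemma cN_setIC1 (D : {set T}) y v :
  y \notin D -> cN e v :&: [set~ y] :&: D = cN e v :&: D.
Proof.
move=> yD; apply/setP => u; rewrite !inE.
by case: (u =P y) => [->|_] /=; rewrite ?(negbTE yD) ?andbF ?andbT.
Qed.

Lemma sum_card_cN_setI (D : {set T}) :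
  \sum_v #|cN e v :&: D| = \sum_(d in D) (deg e d).+1.
Proof.
transitivity (\sum_v \sum_(d in D) (v \in cN e d : nat)).
  apply: eq_bigr => v _; rewrite -sum1_card big_mkcond [RHS]big_mkcond /=.
  by apply: eq_bigr => d _; rewrite inE cN_sym; case: (_ \in D); case: (_ \in cN e d).
rewrite exchange_big; apply: eq_bigr => d _.
by rewrite -card_cN -sum1_card [RHS]big_mkcond.
Qed.

Lemma dominating_cN_setI_gt0 (D : {set T}) v :
  dominating e D -> 0 < #|cN e v :&: D|.
Proof.
move=> /forallP domD; rewrite card_gt0; apply/set0Pn.
have [vD|vD] := boolP (v \in D); first by exists v; rewrite !inE eqxx vD.
have /existsP [u /andP [uD evu]] := implyP (domD v) vD.
by exists u; rewrite !inE uD evu orbT.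
Qed.

Definition dom_excess (D : {set T}) : nat := \sum_v (#|cN e v :&: D| - 1).

Lemma card_add_dom_excess (D : {set T}) : dominating e D ->
  #|T| + dom_excess D = \sum_(d in D) (deg e d).+1.
Proof.
move=> domD; rewrite -sum_card_cN_setI -sum1_card -big_split /=.
by apply: eq_bigr => v _; have := dominating_cN_setI_gt0 v domD; lia.
Qed.

Lemma dom_excess_gt0 (D : {set T}) :
  dominating e D -> ~~ efficient_dom e D -> 0 < dom_excess D.
Proof.
rewrite /efficient_dom /efficient_dom_on subsetT => domD /forallPn [v].
rewrite inE setIT => nv; rewrite /dom_excess (bigD1 v) //=.
by have := dominating_cN_setI_gt0 v domD; move: nv; lia.
Qed.

Lemma dom_excess1P (D : {set T}) : dominating e D ->
  dom_excess D = 1 <->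
  exists y, #|cN e y :&: D| = 2 /\ forall v, v != y -> #|cN e v :&: D| = 1.
Proof.
move=> domD; split => [excess1 | [y [cy cv]]]; last first.
  by rewrite /dom_excess (bigD1 y) //= big1 ?cy // => v /cv ->.
have [y y_over] : exists y, 1 < #|cN e y :&: D|.
  apply/existsP; apply: contraT; rewrite negb_exists => /forallP le1.
  suff /eqP : dom_excess D == 0 by rewrite excess1.
  by rewrite sum_nat_eq0; apply/forallP => v; have := le1 v; lia.
have rest : \sum_(v | v != y) (#|cN e v :&: D| - 1) = 0.
  by move: excess1; rewrite /dom_excess (bigD1 y) //=; lia.
exists y; split; first by move: excess1; rewrite /dom_excess (bigD1 y) //=; lia.
move=> v vy; have := dominating_cN_setI_gt0 v domD.
by have /eqP := rest; rewrite sum_nat_eq0 => /forall_inP /(_ v vy); lia.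
Qed.

Lemma doubly_dominated_notin (D : {set T}) y :
  #|cN e y :&: D| = 2 -> (forall v, v != y -> #|cN e v :&: D| = 1) ->
  y \notin D.
Proof.
move=> cy cv; apply/negP => yD.
have yin : y \in cN e y :&: D by rewrite !inE eqxx yD.
have /set0Pn [d] : (cN e y :&: D) :\ y != set0.
  by rewrite -card_gt0; move: cy; rewrite (cardsD1 y) yin; lia.
rewrite !inE => /and3P [dy /orP [/eqP dy' | eyd] dD]; first by rewrite dy' eqxx in dy.
have : #|[set d; y]| <= #|cN e d :&: D|.
  apply/subset_leq_card/subsetP => z; rewrite !inE => /orP [] /eqP ->.
    by rewrite eqxx dD.
  by rewrite e_sym eyd orbT yD.
by rewrite cards2 dy cv.
Qed.

Lemma efficient_dom_minusP (D : {set T}) y : y \notin D ->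
  efficient_dom_minus e y D <-> forall v, v != y -> #|cN e v :&: D| = 1.
Proof.
move=> yD; rewrite /efficient_dom_minus /efficient_dom_on.
have -> : D \subset [set~ y].
  by apply/subsetP => d dD; rewrite !inE; apply: contraNneq yD => <-.
split => [/forall_inP eff v vy | cv].
  by have := eff v; rewrite !inE cN_setIC1 // => /(_ vy) /eqP.
by apply/forall_inP => v; rewrite !inE cN_setIC1 // => /cv ->.
Qed.

Lemma deg_le_Delta v : deg e v <= Delta e.
Proof. exact: leq_bigmax. Qed.

Lemma sum_degS_add_deficit (D : {set T}) :
  \sum_(d in D) (deg e d).+1 + \sum_(d in D) (Delta e - deg e d)
    = #|D| * (Delta e).+1.
Proof.
rewrite -big_split -sum_nat_const /=; apply: eq_bigr => d _.
by have := deg_le_Delta d; lia.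
Qed.

Lemma deficit_eq0 (D : {set T}) :
  (\sum_(d in D) (Delta e - deg e d) == 0) = [forall d in D, deg e d == Delta e].
Proof.
rewrite sum_nat_eq0; apply: eq_forallb => d.
by have := deg_le_Delta d; case: (d \in D) => //=; lia.
Qed.

Lemma gamma_set_exists : exists D, gamma_set e D.
Proof.
rewrite /gamma_set /gamma; case: arg_minnP => [|D domD _].
  by apply/forallP => v; rewrite inE.
by exists D; rewrite domD eqxx.
Qed.

Lemma gamma_set_count (D : {set T}) : gamma_set e D ->
  #|T| + dom_excess D + \sum_(d in D) (Delta e - deg e d)
    = gamma e * (Delta e).+1.
Proof.
by case/andP => domD /eqP cD; rewrite card_add_dom_excess // sum_degS_add_deficit cD.
Qed.

Lemma efficient_dom_minus_uniq (D : {set T}) y y' :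
  #|cN e y :&: D| = 2 -> y' \notin D -> efficient_dom_minus e y' D -> y' = y.
Proof.
move=> cy y'D /(efficient_dom_minusP y'D) eff.
by apply/eqP; apply: contraT => /eqP /nesym /eqP /eff; rewrite cy.
Qed.

Lemma dom_excess1_witness (D : {set T}) : dominating e D -> dom_excess D = 1 ->
  exists y, [/\ y \notin D, efficient_dom_minus e y D,
                (forall y', y' \notin D -> efficient_dom_minus e y' D -> y' = y)
              & #|oN e y :&: D| = 2].
Proof.
move=> domD /(dom_excess1P domD) [y [cy cv]].
have yD := doubly_dominated_notin cy cv.
exists y; split=> //; first exact/efficient_dom_minusP.
  by move=> y'; apply: efficient_dom_minus_uniq.
by rewrite -cN_setI_notin.
Qed.

Lemma dom_excess1_of_efficient_dom_minus (D : {set T}) y :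
  dominating e D -> y \notin D -> efficient_dom_minus e y D ->
  #|oN e y :&: D| = 2 -> dom_excess D = 1.
Proof.
move=> domD yD /(efficient_dom_minusP yD) cv cy; apply/(dom_excess1P domD).
by exists y; rewrite cN_setI_notin.
Qed.

End DominationCount.

Theorem theorem3p9 (T : finType) (e : rel T)
  (e_sym : symmetric e) (e_irr : irreflexive e)
  (noEDS : forall D : {set T}, ~~ efficient_dom e D) :
  #|T| <= gamma e * (Delta e + 1) - 1
  /\ (#|T| = gamma e * (Delta e + 1) - 1 ->
        (forall D : {set T}, gamma_set e D ->
           exists y : T,
             [/\ y \notin D, efficient_dom_minus e y D,
                 (forall y' : T, y' \notin D -> efficient_dom_minus e y' D -> y' = y)
               & #|oN e y :&: D| = 2])
        /\ (forall v : T, (exists D : {set T}, gamma_set e D /\ v \in D) ->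
              deg e v = Delta e)
        /\ ((forall v : T, exists D : {set T}, gamma_set e D /\ v \in D) ->
              forall v : T, deg e v = Delta e))
  /\ ((exists (D : {set T}) (y : T),
         [/\ gamma_set e D, y \notin D, efficient_dom_minus e y D,
             #|oN e y :&: D| = 2
           & forall v : T, v \in D -> deg e v = Delta e]) ->
      #|T| = gamma e * (Delta e + 1) - 1).
Proof.
have excess_gt0 D : gamma_set e D -> 0 < dom_excess e D.
  by case/andP => domD _; apply: dom_excess_gt0.
have [D0 gD0] := gamma_set_exists e.
have bound : #|T| < gamma e * (Delta e).+1.
  by have := gamma_set_count e_sym e_irr gD0; have := excess_gt0 _ gD0; lia.
split; first by move: bound; rewrite addn1; lia.
split=> [extremal | [D [y [gD yD effD cy degD]]]].
  have tight D : gamma_set e D ->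
      dom_excess e D = 1 /\ \sum_(d in D) (Delta e - deg e d) = 0.
    move=> gD; have := gamma_set_count e_sym e_irr gD.
    by have := excess_gt0 _ gD; move: extremal; rewrite addn1; lia.
  have degD v : (exists D, gamma_set e D /\ v \in D) -> deg e v = Delta e.
    move=> [D [gD vD]]; have /eqP := (tight D gD).2.
    by rewrite deficit_eq0 => /forall_inP /(_ v vD) /eqP.
  split=> [D gD | ]; last by split=> // all_in v; exact: degD.
  by case/andP: (gD) => domD _; apply: dom_excess1_witness => //; case: (tight D gD).
have := gamma_set_count e_sym e_irr gD.
case/andP: (gD) => domD _.
rewrite (dom_excess1_of_efficient_dom_minus domD yD effD cy).
have /eqP -> : \sum_(d in D) (Delta e - deg e d) == 0.
  by rewrite deficit_eq0; apply/forall_inP => d /degD ->.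
by rewrite addn1; lia.
Qed.
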